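(* Let $S$ be the group $\mathbb{Z}/2$, viewed as a semigroup. The category $\mathbf{OI}_{++ep}/N(S)$ is Gröbner.
   Context: Gröbner categories. Let $\mathcal{C}$ be a small category and $c$ an object. An admissible order on the morphisms out of $c$ is a choice, for every object $c'$, of a well-order $\preceq_{c'}$ on $\mathrm{Hom}(c,c')$ such that $f\prec_{c'} f'$ implies $g\circ f\prec_{c''} g\circ f'$ for all $g:c'\to c''$. On morphisms out of $c$ put the preorder $f\le g$ iff $g=h\circ f$ for some $h$; $|c/\mathcal{C}|$ is the associated poset. A poset is Noetherian if every sequence $x_1,x_2,\dots$ has $i<j$ with $x_i\le x_j$. $\mathcal{C}$ is Gröbner if for every object $c$: (G1) morphisms out of $c$ admit an admissible order, and (G2) $|c/\mathcal{C}|$ is Noetherian. $\mathbf{OI}_{++ep}$ is the category of finite ordinals $[n]=\{0<1<\dots<n\}$ with $n\ge1$ and order-preserving injections preserving both endpoints. $N(S)$ assigns $S^n$ to $[n]$, and for such $\varphi:[n]\to[m]$, $N(S)(\varphi)(t_1,\dots,t_m)=(s_1,\dots,s_n)$ with $s_i=t_{\varphi(i-1)+1}\cdots t_{\varphi(i)}$. $\mathbf{OI}_{++ep}/N(S)$ is its category of elements: objects are non-empty finite sequences $(s_1,\dots,s_n)$ in $S$; a morphism $(s_1,\dots,s_n)\to(t_1,\dots,t_m)$ is an endpoint-preserving injection $\varphi:[n]\to[m]$ with $N(S)(\varphi)(t_1,\dots,t_m)=(s_1,\dots,s_n)$. *)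

From mathcomp Require Import all_boot all_algebra.
Set Implicit Arguments. Unset Strict Implicit. Unset Printing Implicit Defensive.

(* The category of elements OI_{++ep}/N(S) for a semigroup (T, op).
   Objects: non-empty sequences s = (s_1,...,s_n) (here: seq T with size > 0).
   A morphism s -> t (n = size s, m = size t) is an order-preserving injection
   phi : [n] -> [m] preserving both endpoints, encoded by the list of its values
   [:: phi 0; phi 1; ...; phi n] (a seq nat), such that
   s_i = t_{phi(i-1)+1} * ... * t_{phi(i)} for i = 1..n. *)
Section ElemCat.
Variables (T : eqType) (op : T -> T -> T).

Definition seqprod (l : seq T) : option T :=
  if l is x :: r then Some (foldl op x r) else None.

(* the block t_{a+1} ... t_b (1-based), i.e. 0-based entries a .. b-1 *)
Definition block (t : seq T) (a b : nat) : seq T := take (b - a) (drop a t).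

Definition isHom (s t : seq T) (p : seq nat) : bool :=
  [&& size p == (size s).+1,
      nth 0 p 0 == 0,
      nth 0 p (size s) == size t,
      sorted ltn p &
      [seq seqprod (block t (nth 0 p i) (nth 0 p i.+1)) | i <- iota 0 (size s)]
        == map Some s].

Definition comp (g f : seq nat) : seq nat := map (nth 0 g) f.

Definition well_order_on (X : Type) (A : X -> Prop) (le : X -> X -> bool) :=
  [/\ (forall x, A x -> le x x),
      (forall x y, A x -> A y -> le x y -> le y x -> x = y),
      (forall x y z, A x -> A y -> A z -> le x y -> le y z -> le x z),
      (forall x y, A x -> A y -> le x y \/ le y x) &
      (forall P : X -> Prop, (exists x, A x /\ P x) ->
         exists x, [/\ A x, P x & forall y, A y -> P y -> le x y])].

Definition admissible_order (c : seq T) (ord : seq T -> rel (seq nat)) :=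
  (forall c', 0 < size c' -> well_order_on (fun f => isHom c c' f) (ord c')) /\
  (forall c' c'' f f' g, 0 < size c' -> 0 < size c'' ->
     isHom c c' f -> isHom c c' f' -> isHom c' c'' g ->
     ord c' f f' && (f != f') ->
     ord c'' (comp g f) (comp g f') && (comp g f != comp g f')).

Definition noetherian_under (c : seq T) :=
  forall (tgt : nat -> seq T) (x : nat -> seq nat),
    (forall k, 0 < size (tgt k)) -> (forall k, isHom c (tgt k) (x k)) ->
    exists i j, i < j /\ exists h, isHom (tgt i) (tgt j) h /\ x j = comp h (x i).

Definition groebner_elem_cat : Prop :=
  forall c : seq T, 0 < size c ->
    (exists ord, admissible_order c ord) /\ noetherian_under c.

End ElemCat.

From Pilot Require Import Defs.
From mathcomp Require Import all_boot all_algebra zify.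
From Stdlib Require Import Classical ClassicalEpsilon.
From Stdlib Require Wf_nat.

Set Implicit Arguments. Unset Strict Implicit. Unset Printing Implicit Defensive.

Import GRing.Theory.

(* A morphism out of c is an
   increasing list of values bounded by the size of its target; read as a
   numeral in base (size c' + 1), it orders Hom(c, c') lexicographically,
   a well-order that post-composition, a strictly increasing map on digits,
   preserves.  For Noetherianity a morphism p : c -> t is recorded as a word
   over the finite alphabet S x {0, ..., size c + 1}: its j-th letter is the
   prefix product t_1 ... t_j together with the position of j in the image
   of p.  A subword embedding of the word of x_i into that of x_j, extended by
   0 |-> 0, preserves prefix products and sends the image of x_i onto that of
   x_j, so it is a morphism h with x_j = h o x_i; Higman's lemma, proved by
   Nash-Williams' minimal bad sequence argument, provides the embedding. *)

Lemma ex_least_nat (P : nat -> Prop) :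
  (exists n, P n) -> exists2 m, P m & forall k, P k -> m <= k.
Proof.
move=> exP.
have [m [[Pm least] _]] :=
  Wf_nat.dec_inh_nat_subset_has_unique_least_element P (fun n => classic (P n)) exP.
by exists m => // k /least /leP.
Qed.

Lemma infinite_pigeonhole (A : finType) (f : nat -> A) :
  exists a (sigma : nat -> nat), {homo sigma : i j / i < j} /\ forall i, f (sigma i) = a.
Proof.
have [a often_a] : exists a, forall N, exists k, N <= k /\ f k = a.
  apply: NNPP => none.
  have [N late] : exists N : A -> nat, forall a k, N a <= k -> f k != a.
    apply: (@choice _ _ (fun a n => forall k, n <= k -> f k != a)) => a.
    apply: NNPP => early; apply: none; exists a => N.
    apply: NNPP => no_k; apply: early; exists N => k Nk; apply/eqP => fk.
    by apply: no_k; exists k.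
  pose M := \max_(a : A) N a.
  by have /eqP := late (f M) M (leq_bigmax (f M)).
have [next next_a] := @choice _ _ (fun N k => N <= k /\ f k = a) often_a.
pose fix sigma i := if i is i'.+1 then next (sigma i').+1 else next 0.
exists a, sigma; split; last by case=> [|i]; apply: (next_a _).2.
by apply: homo_ltn => [y x z|i]; [exact: ltn_trans | case: (next_a (sigma i).+1)].
Qed.

Lemma subseq_behead (T : eqType) (s : seq T) : subseq (behead s) s.
Proof. by case: s => //= x s; exact: subseq_cons. Qed.

Section Higman.
Variable A : finType.

Definition bad (f : nat -> seq A) := forall i j, i < j -> ~~ subseq (f i) (f j).

Definition extends_bad (l : seq (seq A)) := exists2 f, bad f & l = mkseq f (size l).

Definition least_bad_extension (l : seq (seq A)) (w : seq A) :=
  extends_bad (rcons l w) /\ forall w', extends_bad (rcons l w') -> size w <= size w'.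

Definition next_min (l : seq (seq A)) : seq A :=
  epsilon (inhabits [::]) (least_bad_extension l).

Lemma next_minP l : extends_bad l -> least_bad_extension l (next_min l).
Proof.
case=> f bad_f El; apply: epsilon_spec.
have ext_f : extends_bad (rcons l (f (size l))).
  by exists f; rewrite // size_rcons mkseqS -El.
have [n [w size_w ext_w] least_n] :=
  @ex_least_nat (fun n => exists2 w, size w = n & extends_bad (rcons l w))
    (ex_intro _ _ (ex_intro2 _ _ (f (size l)) erefl ext_f)).
by exists w; split=> // w' ext_w'; rewrite size_w; apply: least_n; exists w'.
Qed.

Section MinimalBadSequence.
Variable f0 : nat -> seq A.
Hypothesis f0_bad : bad f0.

Fixpoint mbs_prefix k :=
  if k is k'.+1 then rcons (mbs_prefix k') (next_min (mbs_prefix k')) else [::].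

Definition mbs k := next_min (mbs_prefix k).

Lemma mbs_prefixE k : mbs_prefix k = mkseq mbs k.
Proof. by elim: k => //= k IH; rewrite mkseqS -IH. Qed.

Lemma extends_bad_mbs k : extends_bad (mkseq mbs k).
Proof.
rewrite -mbs_prefixE; elim: k => [|k IH]; first by exists f0.
exact: (next_minP IH).1.
Qed.

Lemma mbs_bad : bad mbs.
Proof.
move=> i j ij; have [f bad_f] := extends_bad_mbs j.+1; rewrite size_mkseq => Ef.
have mbsE k : k <= j -> mbs k = f k.
  by move=> kj; rewrite -(nth_mkseq [::] mbs (kj : k < j.+1)) Ef nth_mkseq.
by rewrite !mbsE ?(ltnW ij) //; apply: bad_f.
Qed.

Lemma mbs_minimal k w : extends_bad (rcons (mkseq mbs k) w) -> size (mbs k) <= size w.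
Proof.
by rewrite -mbs_prefixE; apply: (next_minP _).2; rewrite mbs_prefixE; exact: extends_bad_mbs.
Qed.

Lemma mbs_neq_nil k : mbs k != [::].
Proof. by apply/eqP=> Ek; have := mbs_bad (ltnSn k); rewrite Ek sub0seq. Qed.

(* With sigma enumerating words of mbs that share their first letter and
   k0 := sigma 0, the words of mbs below k0 followed by the tails of the
   mbs (sigma n) form a bad sequence whose k0-th word is shorter than mbs k0. *)
Lemma no_bad_sequence : False.
Proof.
have x0 : A by case: (mbs 0) (mbs_neq_nil 0).
have [a [sigma [sigma_mono sigma_a]]] := infinite_pigeonhole (fun k => head x0 (mbs k)).
have mbsE k : mbs k = head x0 (mbs k) :: behead (mbs k).
  by case: (mbs k) (mbs_neq_nil k).
pose k0 := sigma 0.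
pose f n := if n < k0 then mbs n else behead (mbs (sigma (n - k0))).
have bad_f : bad f.
  move=> i j ij; rewrite /f; case: (ltnP j k0) => jk0.
    by rewrite (ltn_trans ij jk0) mbs_bad.
  case: (ltnP i k0) => ik0.
    have i_sigma : i < sigma (j - k0) by rewrite (leq_trans ik0) ?(ltnW_homo sigma_mono).
    by apply: contra (mbs_bad i_sigma) => /subseq_trans; apply; exact: subseq_behead.
  have ij_sigma : sigma (i - k0) < sigma (j - k0).
    by rewrite sigma_mono // ltn_sub2r // (leq_ltn_trans ik0 ij).
  apply: contra (mbs_bad ij_sigma) => sub.
  by rewrite (mbsE (sigma (i - k0))) (mbsE (sigma (j - k0))) !sigma_a /= eqxx.
have : extends_bad (rcons (mkseq mbs k0) (behead (mbs k0))).
  exists f => //; rewrite size_rcons size_mkseq mkseqS /f ltnn subnn; congr rcons.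
  by apply/eq_in_map => n; rewrite mem_iota => /andP[_ ->].
move/mbs_minimal; rewrite size_behead.
by case: (mbs k0) (mbs_neq_nil k0) => [|x r] //= _; rewrite ltnn.
Qed.

End MinimalBadSequence.
End Higman.

Theorem higman (A : finType) (f : nat -> seq A) : exists i j, i < j /\ subseq (f i) (f j).
Proof.
apply: NNPP => no_pair; apply: (@no_bad_sequence _ f) => i j ij.
by apply/negP => sub; apply: no_pair; exists i, j.
Qed.

Lemma subseq_nthP (T : eqType) (x0 : T) (u v : seq T) : subseq u v ->
  exists2 idx, subseq idx (iota 0 (size v)) & u = map (nth x0 v) idx.
Proof.
case/subseqP=> m _ ->; exists (mask m (iota 0 (size v))); first exact: mask_subseq.
by rewrite map_mask; congr mask; exact/esym/mkseq_nth.
Qed.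

Lemma ltn_lex_mulD x y c c' P : c < P -> c' < P ->
  (x * P + c < y * P + c') = (x < y) || (x == y) && (c < c').
Proof.
move=> cP c'P; case: (ltngtP x y) => [xy|yx|->] /=; last by rewrite ltn_add2l.
- by have := leq_mul xy (leqnn P); nia.
- by have := leq_mul yx (leqnn P); nia.
Qed.

Fixpoint num_of_digits (B : nat) (l : seq nat) : nat :=
  if l is x :: r then x * B ^ size r + num_of_digits B r else 0.

Lemma num_of_digits_lt B l : all (gtn B) l -> num_of_digits B l < B ^ size l.
Proof.
elim: l => [|x r IH] /=; first by rewrite expn0.
case/andP=> xB /IH rB; rewrite expnS.
by have := leq_mul xB (leqnn (B ^ size r)); move: (B ^ size r) rB => P; nia.
Qed.

Lemma num_of_digits_cons_ltn B x y r r' : size r = size r' ->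
  all (gtn B) r -> all (gtn B) r' ->
  (num_of_digits B (x :: r) < num_of_digits B (y :: r')) =
  (x < y) || (x == y) && (num_of_digits B r < num_of_digits B r').
Proof.
move=> sr rB r'B; rewrite /= -sr ltn_lex_mulD ?num_of_digits_lt //.
by rewrite sr num_of_digits_lt.
Qed.

Lemma num_of_digits_inj B l l' : size l = size l' -> all (gtn B) l -> all (gtn B) l' ->
  num_of_digits B l = num_of_digits B l' -> l = l'.
Proof.
elim: l l' => [|x r IH] [|y r'] //= [sr] /andP[xB rB] /andP[yB r'B].
have P_gt0 : 0 < B ^ size r by rewrite expn_gt0 (leq_ltn_trans (leq0n x) xB).
have [cr cr'] := (num_of_digits_lt rB, num_of_digits_lt r'B); rewrite -sr in cr' *.
move=> E; have Exy : x = y.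
  by move/(congr1 (divn^~ (B ^ size r))): E; rewrite !divnMDl // !divn_small // !addn0.
by move: E; rewrite Exy => /addnI /IH ->.
Qed.

Lemma num_of_digits_homo B B' (h : nat -> nat) l l' : size l = size l' ->
  all (gtn B) l -> all (gtn B) l' ->
  (forall x y, x < B -> y < B -> x < y -> h x < h y) -> (forall x, x < B -> h x < B') ->
  num_of_digits B l < num_of_digits B l' ->
  num_of_digits B' (map h l) < num_of_digits B' (map h l').
Proof.
move=> + + + h_mono hB; elim: l l' => [|x r IH] [|y r'] // [sr] /andP[xB rB] /andP[yB r'B].
have hB_all s : all (gtn B) s -> all (gtn B') (map h s).
  by rewrite all_map => sB; apply: sub_all sB => z /hB.
rewrite !map_cons !num_of_digits_cons_ltn ?size_map ?hB_all //.
case/orP=> [xy | /andP[/eqP <- lt]]; first by rewrite h_mono.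
by rewrite eqxx IH ?orbT.
Qed.

Section Morphisms.
Variables (T : eqType) (op : T -> T -> T).
Implicit Types (s t : seq T) (p : seq nat).

Lemma hom_spec s t p : isHom op s t p ->
  [/\ size p = (size s).+1, nth 0 p 0 = 0, nth 0 p (size s) = size t & sorted ltn p].
Proof. by case/and5P=> /eqP-> /eqP-> /eqP-> ->. Qed.

Lemma hom_le s t p x : isHom op s t p -> x \in p -> x <= size t.
Proof.
case/hom_spec=> size_p _ last_p sorted_p x_p.
have sorted_leq : sorted leq p by move: sorted_p; rewrite ltn_sorted_uniq_leq => /andP[].
have idx_x : index x p < size p by rewrite index_mem.
rewrite -(nth_index 0 x_p) -last_p.
apply: (sorted_leq_nth leq_trans leqnn 0 sorted_leq).
- exact: idx_x.
- by rewrite size_p; exact: ltnSn.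
- by rewrite -ltnS -size_p.
Qed.

Lemma hom_digits s t p : isHom op s t p -> all (gtn (size t).+1) p.
Proof. by move=> hom_p; apply/allP=> x /(hom_le hom_p). Qed.

Lemma hom_size_eq s t t' p p' : isHom op s t p -> isHom op s t' p' -> size p = size p'.
Proof. by case/hom_spec=> -> _ _ _ /hom_spec[-> _ _ _]. Qed.

Lemma hom_index0 s t p : isHom op s t p -> index 0 p = 0.
Proof. by case/hom_spec; case: p => // x p _ /= ->. Qed.

Lemma hom_index_lt s t p x :
  isHom op s t p -> index x p < (size s).+2.
Proof. by case/hom_spec=> size_p _ _ _; rewrite ltnS -size_p index_size. Qed.

Definition digits_le (B : nat) : rel (seq nat) :=
  fun f f' => num_of_digits B f <= num_of_digits B f'.

Lemma hom_num_of_digits_inj c c' f f' : isHom op c c' f -> isHom op c c' f' ->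
  num_of_digits (size c').+1 f = num_of_digits (size c').+1 f' -> f = f'.
Proof.
move=> hom_f hom_f'.
exact: num_of_digits_inj (hom_size_eq hom_f hom_f') (hom_digits hom_f) (hom_digits hom_f').
Qed.

Lemma well_order_homs c c' :
  well_order_on (fun f => isHom op c c' f) (digits_le (size c').+1).
Proof.
split=> [f _ | f f' hom_f hom_f' le_ff' le_f'f | f f' f'' _ _ _ | f f' _ _ | P].
- exact: leqnn.
- by apply: (hom_num_of_digits_inj hom_f hom_f'); apply/eqP; rewrite eqn_leq; apply/andP.
- exact: leq_trans.
- exact/orP/leq_total.
case=> f [hom_f Pf].
have [n [g [hom_g Pg <-]] least_n] := @ex_least_nat
  (fun n => exists g, [/\ isHom op c c' g, P g & num_of_digits (size c').+1 g = n])
  (ex_intro _ _ (ex_intro _ f (And3 hom_f Pf erefl))).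
by exists g; split=> // g' hom_g' Pg'; apply: least_n; exists g'.
Qed.

Lemma comp_num_of_digits_ltn c c' c'' f f' g :
  isHom op c c' f -> isHom op c c' f' -> isHom op c' c'' g ->
  num_of_digits (size c').+1 f < num_of_digits (size c').+1 f' ->
  num_of_digits (size c'').+1 (Defs.comp g f) < num_of_digits (size c'').+1 (Defs.comp g f').
Proof.
move=> hom_f hom_f' hom_g; have [size_g _ _ sorted_g] := hom_spec hom_g.
apply: num_of_digits_homo (hom_size_eq hom_f hom_f') (hom_digits hom_f) (hom_digits hom_f') _ _.
- move=> x y _ y_lt x_lt_y; rewrite -size_g in y_lt.
  exact: (sorted_ltn_nth ltn_trans 0 sorted_g) (ltn_trans x_lt_y y_lt) y_lt x_lt_y.
- by move=> x x_lt; rewrite ltnS (hom_le hom_g) // mem_nth // size_g.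
Qed.

Lemma admissible_digits_le c : admissible_order op c (fun c' => digits_le (size c').+1).
Proof.
split=> [c' _ | c' c'' f f' g _ _ hom_f hom_f' hom_g /andP[le_ff' neq_ff']].
  exact: well_order_homs.
have lt_ff' : num_of_digits (size c').+1 f < num_of_digits (size c').+1 f'.
  rewrite ltn_neqAle andbC; apply/andP; split; first exact: le_ff'.
  by apply: contra neq_ff' => /eqP /(hom_num_of_digits_inj hom_f hom_f') ->.
have lt_gf := comp_num_of_digits_ltn hom_f hom_f' hom_g lt_ff'.
apply/andP; split; first exact: ltnW lt_gf.
by apply: contraTneq lt_gf => ->; rewrite ltnn.
Qed.

End Morphisms.

Section PrefixSums.
Variable V : zmodType.
Implicit Types t : seq V.

Definition prefix_sum t (j : nat) : V := (\sum_(x <- take j t) x)%R.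

Lemma prefix_sum0 t : prefix_sum t 0 = 0%R.
Proof. by rewrite /prefix_sum take0 big_nil. Qed.

Lemma prefix_sumS t j : j < size t -> prefix_sum t j.+1 = (prefix_sum t j + nth 0 t j)%R.
Proof. by move=> jt; rewrite /prefix_sum (take_nth 0%R) // -cats1 big_cat big_seq1. Qed.

Lemma seqprod_add (x : V) r : seqprod +%R (x :: r) = Some (\sum_(y <- x :: r) y)%R.
Proof.
rewrite /= big_cons; congr Some.
elim: r x => [|y r IH] x /=; first by rewrite big_nil addr0.
by rewrite IH big_cons addrA.
Qed.

Lemma seqprod_block t a b : a < b -> b <= size t ->
  seqprod +%R (block t a b) = Some (prefix_sum t b - prefix_sum t a)%R.
Proof.
move=> ab bt.
have take_b : take b t = take a t ++ block t a b by rewrite /block -takeD subnKC // ltnW.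
have size_block : size (block t a b) = b - a.
  by rewrite /block size_takel // size_drop leq_sub2r.
case E: (block t a b) size_block => [|x r] size_block.
  by move: ab; rewrite -subn_gt0 -size_block.
by rewrite seqprod_add -E /prefix_sum take_b big_cat /= addrAC subrr add0r.
Qed.

Lemma isHom_prefix_sums t t' H :
  size H = (size t).+1 -> nth 0 H 0 = 0 -> nth 0 H (size t) = size t' ->
  subseq H (iota 0 (size t').+1) ->
  (forall j, j <= size t -> prefix_sum t' (nth 0 H j) = prefix_sum t j) ->
  isHom +%R t t' H.
Proof.
move=> size_H H0 H_last sub_H sums_H.
have sorted_H : sorted ltn H := subseq_sorted ltn_trans sub_H (iota_ltn_sorted 0 _).
apply/and5P; split; rewrite ?size_H ?H0 ?H_last //.
apply/eqP; rewrite -[in RHS](mkseq_nth 0%R t) /mkseq -map_comp.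
apply/eq_in_map => j; rewrite mem_iota => /andP[_ jt] /=.
have jH : j.+1 < size H by rewrite size_H.
have H_inc : nth 0 H j < nth 0 H j.+1.
  exact: (sorted_ltn_nth ltn_trans 0 sorted_H) (ltn_trans (ltnSn j) jH) jH (ltnSn j).
have H_le : nth 0 H j.+1 <= size t'.
  by have := mem_subseq sub_H (mem_nth 0 jH); rewrite mem_iota.
rewrite seqprod_block // !sums_H ?(ltnW jt) //.
by rewrite prefix_sumS // addrAC subrr add0r.
Qed.

End PrefixSums.

Section BoundaryWords.
Variable V : finZmodType.
Implicit Types (c t : seq V) (p : seq nat).

(* Boundary j of t (1 <= j <= size t) is labelled by the prefix sum up to it
   and by its position in the image of p; it is [size p] when j is not in it. *)
Definition boundary_word n t p : seq (V * 'I_n.+2) :=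
  [seq (prefix_sum t j, inord (index j p)) | j <- iota 1 (size t)].

Lemma nth_boundary_word n t p d j : j < size t ->
  nth d (boundary_word n t p) j = (prefix_sum t j.+1, inord (index j.+1 p)).
Proof. by move=> jt; rewrite (nth_map 0) ?size_iota // nth_iota. Qed.

Lemma subseq_boundary_word c t t' p p' : isHom +%R c t p -> isHom +%R c t' p' ->
  subseq (boundary_word (size c) t p) (boundary_word (size c) t' p') ->
  exists H, [/\ subseq H (iota 0 (size t').+1), size H = (size t).+1, nth 0 H 0 = 0 &
    forall j, j <= size t ->
      prefix_sum t' (nth 0 H j) = prefix_sum t j /\ index (nth 0 H j) p' = index j p].
Proof.
move=> hom_p hom_p' /(subseq_nthP (0%R, ord0)) [idx + word_idx].
rewrite size_map size_iota => sub_idx.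
have size_idx : size idx = size t.
  by move/(congr1 size): word_idx; rewrite !size_map size_iota.
exists (0 :: [seq i.+1 | i <- idx]); split=> //.
- have iota1 : iota 1 (size t') = [seq i.+1 | i <- iota 0 (size t')].
    by rewrite -[1]addn0 iotaDl; apply: eq_map => i; rewrite add1n.
  by rewrite /= iota1; apply: map_subseq.
- by rewrite /= size_map size_idx.
case=> [_ | j jt] /=; first by rewrite !prefix_sum0 (hom_index0 hom_p) (hom_index0 hom_p').
have idx_j : nth 0 idx j < size t'.
  have j_idx : j < size idx by rewrite size_idx.
  by have := mem_subseq sub_idx (mem_nth 0 j_idx); rewrite mem_iota.
have := congr1 (nth (0%R, ord0) ^~ j) word_idx.
rewrite /= (nth_map 0) ?size_idx // !nth_boundary_word // => [[sums /(congr1 val)]].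
rewrite /= !inordK ?(hom_index_lt _ hom_p) ?(hom_index_lt _ hom_p') // => indices.
by rewrite (nth_map 0) ?size_idx.
Qed.

Lemma subseq_boundary_word_hom c t t' p p' : isHom +%R c t p -> isHom +%R c t' p' ->
  subseq (boundary_word (size c) t p) (boundary_word (size c) t' p') ->
  exists2 H, isHom +%R t t' H & p' = Defs.comp H p.
Proof.
move=> hom_p hom_p' /(subseq_boundary_word hom_p hom_p') [H [sub_H size_H H0 labels]].
have [size_p _ last_p sorted_p] := hom_spec hom_p.
have [size_p' _ last_p' _] := hom_spec hom_p'.
have H_p i : i < size p -> nth 0 H (nth 0 p i) = nth 0 p' i.
  move=> ip; have [_] := labels _ (hom_le hom_p (mem_nth 0 ip)).
  rewrite index_uniq ?(sorted_uniq ltn_trans ltnn) // => index_H.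
  have H_in_p' : nth 0 H (nth 0 p i) \in p' by rewrite -index_mem index_H size_p' -size_p.
  by rewrite -[in RHS]index_H nth_index.
exists H.
  apply: isHom_prefix_sums => //; last by move=> j /labels[].
  by rewrite -last_p H_p ?size_p.
apply: (@eq_from_nth _ 0) => [|i]; first by rewrite size_map size_p size_p'.
by rewrite size_p' -size_p => ip; rewrite (nth_map 0) // H_p.
Qed.

Lemma noetherian_finZmod c : noetherian_under +%R c.
Proof.
move=> tgt x _ hom_x.
have [i [j [ij sub]]] := higman (fun k => boundary_word (size c) (tgt k) (x k)).
have [H hom_H xjE] := subseq_boundary_word_hom (hom_x i) (hom_x j) sub.
by exists i, j; split=> //; exists H.
Qed.

End BoundaryWords.

Theorem groebner_finZmod (V : finZmodType) : groebner_elem_cat (+%R : V -> V -> V).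
Proof.
move=> c _; split; last exact: noetherian_finZmod.
by exists (fun c' => digits_le (size c').+1); apply: admissible_digits_le.
Qed.

Theorem proposition5p13 : groebner_elem_cat (+%R : 'Z_2 -> 'Z_2 -> 'Z_2).
Proof. exact: groebner_finZmod. Qed.
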